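(* For any $n\in\mathbb{N}$, $(\mathcal{A}_n,L)$ is an automatic structure for $\mathrm{rps}_n$, where $L=\bigcup_{B\subseteq\mathcal{A}_n}L^B$, with $L^\emptyset=\{\varepsilon\}$, $L^B=L^{(a_1)}L^{(a_2)}\cdots L^{(a_k)}$ for $B=\{a_1<\cdots<a_k\}\neq\emptyset$, and $L^{(j)}=\{n\}^*\{n-1\}^*\cdots\{j+1\}^*\{j\}^+$ for $j\in\mathcal{A}_n$.
   Context: Let $\mathcal{A}_n=\{1<2<\cdots<n\}$. An rPS tableau is a finite (possibly empty) sequence of nonempty bottom-justified columns of boxes filled with positive integers, such that the entries of each column are weakly decreasing from top to bottom and the bottom entries of the columns form a strictly increasing sequence from left to right. Right insertion of a symbol $a$ into an rPS tableau $B$: if $a$ is strictly greater than every entry of the bottom row, append a new column consisting of $a$ at the right end; otherwise, let $z$ be the leftmost bottom-row entry with $z\geq a$ and put $a$ in a new box at the bottom of the column of $z$ (the previous entries of that column move up one box). For $w=w_1\cdots w_k$, $\mathfrak{R}_r(w)$ is obtained by starting with the empty tableau and right-inserting $w_1,\dots,w_k$ in order. The monoid $\mathrm{rps}_n$ is the quotient of $\mathcal{A}_n^*$ by the congruence $u\equiv v\iff\mathfrak{R}_r(u)=\mathfrak{R}_r(v)$; words are identified with the elements they represent. For an alphabet $\Sigma$ and a padding symbol $\$\notin\Sigma$, $\delta_R:\Sigma^*\times\Sigma^*\to((\Sigma\cup\{\$\})\times(\Sigma\cup\{\$\}))^*$ sends $(u_1\cdots u_m,v_1\cdots v_p)$ to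 the word of pairs $(u_i,v_i)$ obtained after padding the shorter word on the right with $\$$'s to equal length; $\delta_L$ is the same with padding on the left. For a monoid $M$ generated by finite $\Sigma$ and a regular language $L\subseteq\Sigma^*$ mapping onto $M$, define $L_a=\{(u,v)\in L\times L: ua=_M v\}$ and ${}_aL=\{(u,v)\in L\times L: au=_M v\}$. $(\Sigma,L)$ is an automatic structure for $M$ if $(L_a)\delta_R$ is a regular language for every $a\in\Sigma\cup\{\varepsilon\}$. *)

From mathcomp Require Import all_boot all_order.
Set Implicit Arguments. Unset Strict Implicit. Unset Printing Implicit Defensive.

(* ---------- rPS tableaux over positive integers (nat) ----------
   A tableau is a list of columns, left to right; each column is listed
   from its BOTTOM entry to its TOP entry (so [head] is the bottom entry). *)
Definition tableau := seq (seq nat).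

Fixpoint rins (B : tableau) (a : nat) : tableau :=
  match B with
  | [::] => [:: [:: a]]
  | c :: B' => if a <= head 0 c then (a :: c) :: B' else c :: rins B' a
  end.

Definition Rr (w : seq nat) : tableau := foldl rins [::] w.

(* The alphabet A_n = {1 < ... < n} is represented by 'I_n, the symbol
   i : 'I_n standing for the integer i+1. *)
Definition sym {n} (i : 'I_n) : nat := i.+1.
Definition RrA {n} (w : seq 'I_n) : tableau := Rr (map sym w).

Definition rps_eq {n} (u v : seq 'I_n) : Prop := RrA u = RrA v.

Definition regular {X : finType} (P : seq X -> Prop) : Prop :=
  exists (Q : finType) (q0 : Q) (d : Q -> X -> Q) (F : pred Q),
    forall w, P w <-> F (foldl d q0 w).

(* ---------- padded convolution delta_R ($ = None) ---------- *)
Definition deltaR {X : Type} (u v : seq X) : seq (option X * option X) :=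
  [seq (nth None (map Some u) i, nth None (map Some v) i)
     | i <- iota 0 (maxn (size u) (size v))].

(* L_a with a in Sigma ∪ {eps}: None encodes eps *)
Definition La {n} (L : seq 'I_n -> Prop) (a : option 'I_n)
    (p : seq (option 'I_n * option 'I_n)) : Prop :=
  exists u v, L u /\ L v /\
    rps_eq (u ++ (if a is Some x then [:: x] else [::])) v /\ p = deltaR u v.

Definition automatic_structure_rps (n : nat) (L : seq 'I_n -> Prop) : Prop :=
  regular L /\
  (forall w : seq 'I_n, exists u, L u /\ rps_eq u w) /\
  (forall a : option 'I_n, regular (La L a)).

Definition inLj (n j : nat) (w : seq nat) : Prop :=
  exists e : nat -> nat, 0 < e j /\
    w = flatten [seq nseq (e i) i | i <- rev (iota j (n - j + 1))].

Fixpoint inLseq (n : nat) (bs : seq nat) (w : seq nat) : Prop :=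
  match bs with
  | [::] => w = [::]
  | b :: bs' => exists u v, w = u ++ v /\ inLj n b u /\ inLseq n bs' v
  end.

Definition inL (n : nat) (w : seq 'I_n) : Prop :=
  exists B : {set 'I_n},
    inLseq n [seq sym i | i <- sort (fun x y : 'I_n => x <= y) (enum B)] (map sym w).

Arguments automatic_structure_rps n L : clear implicits.
Arguments inL n w : clear implicits.

From mathcomp Require Import all_boot.
Set Implicit Arguments. Unset Strict Implicit. Unset Printing Implicit Defensive.

(* The words of L^B are exactly the readings of the tableaux with bottom row B,
   and a tableau is recovered from its reading by right insertion, so L is a
   cross-section of rps_n.  Whether a word is a reading can be decided by remembering
   only the bottoms of the last two columns, so L is regular.  Right insertion of a
   puts a at the bottom of a single column; hence the reading of u a is w a s, where
   u = w s and w ends with that column.  The padded pair (u, u a) is thus a diagonal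
   part followed by a shift by one letter, and the split point is determined by the
   column bottoms, which a finite automaton reads along the upper track. *)

(** * Finite automata and padded convolution *)

Lemma regular_of_closed_states (X : finType) (S : eqType) (states : seq S) (s0 : S)
    (step : S -> X -> S) (accept : pred S) (P : seq X -> Prop) :
  s0 \in states -> (forall s x, s \in states -> step s x \in states) ->
  (forall w, P w <-> accept (foldl step s0 w)) -> regular P.
Proof.
move=> s0_in step_in HP.
pose enc (s : S) : 'I_(size states).+1 := inord (index s states).
pose dec (q : 'I_(size states).+1) : S := nth s0 states q.
have encK s : s \in states -> dec (enc s) = s.
  by move=> s_in; rewrite /dec /enc inordK ?nth_index // ltnS index_size.
have dec_run w q : dec q \in states ->
    dec (foldl (fun q x => enc (step (dec q) x)) q w) = foldl step (dec q) w.
  by elim: w q => [|x w IHw] q q_in //=; rewrite IHw encK ?step_in.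
exists 'I_(size states).+1, (enc s0), (fun q x => enc (step (dec q) x)), (accept \o dec).
by move=> w; rewrite /= dec_run encK ?HP.
Qed.

Lemma foldl_map (A B C : Type) (f : A -> B -> A) (g : C -> B) z s :
  foldl f z (map g s) = foldl (fun a x => f a (g x)) z s.
Proof. by elim: s z => [|x s IHs] z //=. Qed.

Fixpoint conv {X : Type} (u v : seq X) : seq (option X * option X) :=
  match u, v with
  | a :: u', b :: v' => (Some a, Some b) :: conv u' v'
  | [::], _ => map (fun b => (None, Some b)) v
  | _, [::] => map (fun a => (Some a, None)) u
  end.

Lemma deltaR_cons {X : Type} (u v : seq X) : u ++ v <> [::] ->
  deltaR u v = (ohead u, ohead v) :: deltaR (behead u) (behead v).
Proof.
move=> uv_nil; rewrite /deltaR.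
have -> : maxn (size u) (size v) = (maxn (size (behead u)) (size (behead v))).+1.
  by case: u uv_nil => [|a u]; case: v => [|b v] //= _; rewrite ?maxnSS ?maxn0 ?max0n.
rewrite /= -add1n iotaDl -map_comp; congr (_ :: _); first by case: u {uv_nil}; case: v.
by apply: eq_map => i /=; rewrite add1n; case: u {uv_nil}; case: v => [|? ?] /=; rewrite ?nth_nil.
Qed.

Lemma deltaRE {X : Type} (u v : seq X) : deltaR u v = conv u v.
Proof.
elim: u v => [|a u IHu] [|b v] //; rewrite deltaR_cons //= ?IHu //; congr (_ :: _).
- by elim: v {b} => [|b v IHv] //; rewrite deltaR_cons //= IHv.
- by elim: u {IHu a} => [|a u IHu] //; rewrite deltaR_cons //= IHu.
Qed.

Lemma conv_cat_diag {X : Type} (w s t : seq X) : conv (w ++ s) (w ++ t) = conv w w ++ conv s t.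
Proof. by elim: w => [|a w IHw] //=; rewrite IHw. Qed.

Definition omap2 {X Y : Type} (f : X -> Y) (p : option X * option X) := (omap f p.1, omap f p.2).

Lemma map_conv {X Y : Type} (f : X -> Y) (u v : seq X) :
  map (omap2 f) (conv u v) = conv (map f u) (map f v).
Proof. by elim: u v => [|a u IHu] [|b v] //=; rewrite ?IHu -?map_comp. Qed.

Lemma omap2_inj {X Y : Type} (f : X -> Y) : injective f -> injective (omap2 f).
Proof.
move=> f_inj; have omap_inj : injective (omap f) by move=> [x|] [y|] //= [/f_inj ->].
by move=> [a b] [a' b'] [/omap_inj -> /omap_inj ->].
Qed.

(** * Tableaux and reading words *)

Definition bottoms (T : tableau) : seq nat := map (head 0) T.
Definition reading (T : tableau) : seq nat := flatten (map rev T).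
Definition in_alph (n a : nat) := 0 < a <= n.
Definition column_ok n (c : seq nat) := [&& c != [::], sorted leq c & all (in_alph n) c].
Definition tableau_ok n (T : tableau) := all (column_ok n) T && path ltn 0 (bottoms T).
Definition last_bottom (T : tableau) := last 0 (bottoms T).
Definition penult_bottom (T : tableau) := last 0 (belast 0 (bottoms T)).

Lemma path_ltn_le_last x s : path ltn x s -> all (leq^~ (last x s)) s.
Proof.
elim: s x => [|a s IHs] x //= /andP[_ a_s]; rewrite IHs // andbT.
case/predU1P: (mem_last a s) => [-> //|s_last].
exact: ltnW (allP (order_path_min ltn_trans a_s) _ s_last).
Qed.

Lemma head_le_sorted (c : seq nat) : sorted leq c -> all (leq (head 0 c)) c.
Proof. by case: c => [|h t] //= c_sorted; rewrite leqnn (order_path_min leq_trans). Qed.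

Lemma last_bottom_rcons T c : last_bottom (rcons T c) = head 0 c.
Proof. by rewrite /last_bottom /bottoms map_rcons last_rcons. Qed.

Lemma penult_bottom_rcons T c : penult_bottom (rcons T c) = last_bottom T.
Proof. by rewrite /penult_bottom /last_bottom /bottoms map_rcons belast_rcons. Qed.

Lemma tableau_ok_rcons n T c :
  tableau_ok n (rcons T c) = [&& tableau_ok n T, column_ok n c & last_bottom T < head 0 c].
Proof.
rewrite /tableau_ok /last_bottom /bottoms map_rcons all_rcons rcons_path.
by case: (column_ok n c); case: (all (column_ok n) T); rewrite ?andbF ?andbT.
Qed.

Lemma tableau_ok_cat n T1 T2 : tableau_ok n (T1 ++ T2) ->
  [/\ tableau_ok n T1, all (column_ok n) T2 & path ltn (last_bottom T1) (bottoms T2)].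
Proof.
rewrite /tableau_ok /bottoms map_cat all_cat cat_path.
by case/andP=> /andP[-> ->] /andP[-> ->].
Qed.

Lemma bottoms_le_last n T : tableau_ok n T -> all (leq^~ (last_bottom T)) (bottoms T).
Proof. by case/andP=> _; apply: path_ltn_le_last. Qed.

Lemma bottoms_in_alph n T : all (column_ok n) T -> all (in_alph n) (bottoms T).
Proof.
rewrite /bottoms all_map; apply: sub_all => -[|h c] //=.
by case/and3P=> _ _ /andP[].
Qed.

Lemma reading_cat T1 T2 : reading (T1 ++ T2) = reading T1 ++ reading T2.
Proof. by rewrite /reading map_cat flatten_cat. Qed.

Lemma reading_rcons T c : reading (rcons T c) = reading T ++ rev c.
Proof. by rewrite -cats1 reading_cat /reading /= cats0. Qed.

Lemma reading_in_alph n T : all (column_ok n) T -> all (in_alph n) (reading T).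
Proof.
elim: T => [|c T IHT] //= /andP[/and3P[_ _ c_alph] T_ok].
by rewrite /reading /= all_cat all_rev c_alph IHT.
Qed.

Lemma rins_cat T1 T2 a : rins (T1 ++ T2) a =
  if has (fun c => a <= head 0 c) T1 then rins T1 a ++ T2 else T1 ++ rins T2 a.
Proof. by elim: T1 => [|c T1 IHT] //=; case: ifP => //= _; rewrite IHT; case: ifP. Qed.

Lemma has_bottom_geF (T : tableau) a : all (fun h => h < a) (bottoms T) ->
  has (fun c => a <= head 0 c) T = false.
Proof.
move=> T_lt; apply/negbTE; rewrite -all_predC; move: T_lt; rewrite /bottoms all_map.
by apply: sub_all => c /=; rewrite -ltnNge.
Qed.

Lemma rins_new_column T a : all (fun h => h < a) (bottoms T) -> rins T a = rcons T [:: a].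
Proof. by move=> T_lt; rewrite -cats1 -{1}(cats0 T) rins_cat has_bottom_geF. Qed.

Lemma rins_columns_ok n T lo a : all (column_ok n) T -> path ltn lo (bottoms T) ->
  lo < a -> in_alph n a -> all (column_ok n) (rins T a) && path ltn lo (bottoms (rins T a)).
Proof.
elim: T lo => [|c T IHT] lo /=; first by move=> _ _ -> a_ok; rewrite /column_ok /= a_ok.
case/andP=> c_ok T_ok /andP[lo_c c_T] lo_a a_ok.
case: ifP => a_c /=; last by rewrite c_ok lo_c IHT // ltnNge a_c.
case: c c_ok a_c lo_c c_T => [|h c] // /and3P[_ c_sorted c_alph] a_h _ c_T.
rewrite /= in c_sorted c_alph; rewrite /column_ok /= a_ok a_h c_sorted c_alph T_ok lo_a /=.
by case: (bottoms T) c_T => [|h' hs] //= /andP[h_h' ->]; rewrite (leq_ltn_trans a_h).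
Qed.

Lemma tableau_ok_rins n T a : tableau_ok n T -> in_alph n a -> tableau_ok n (rins T a).
Proof. by case/andP=> T_ok T_path /[dup] a_ok /andP[a_pos _]; apply: rins_columns_ok. Qed.

Lemma tableau_ok_Rr n w : all (in_alph n) w -> tableau_ok n (Rr w).
Proof.
rewrite /Rr; have : tableau_ok n [::] by [].
elim: w [::] => [|a w IHw] T //= T_ok /andP[a_ok w_ok].
exact/IHw/w_ok/tableau_ok_rins.
Qed.

Lemma foldl_rins_column T c : c != [::] -> sorted leq c ->
  all (fun h => h < head 0 c) (bottoms T) -> foldl rins T (rev c) = rcons T c.
Proof.
elim: c => [|a c IHc] // _ c_sorted T_lt; rewrite rev_cons -cats1 foldl_cat /=.
case: c IHc c_sorted T_lt => [|b c] IHc /=; first by move=> _ /rins_new_column.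
case/andP=> a_b c_sorted T_lt.
rewrite IHc //=; last by apply: sub_all T_lt => h /= /leq_trans; apply.
by rewrite -cats1 rins_cat has_bottom_geF //= a_b cats1.
Qed.

Lemma foldl_rins_reading n T0 lo T : all (leq^~ lo) (bottoms T0) ->
  all (column_ok n) T -> path ltn lo (bottoms T) -> foldl rins T0 (reading T) = T0 ++ T.
Proof.
elim: T T0 lo => [|c T IHT] T0 lo /=; first by rewrite cats0.
move=> T0_le /andP[/and3P[c_nil c_sorted _] T_ok] /andP[lo_c c_T].
rewrite /reading /= foldl_cat foldl_rins_column //; last first.
  by apply: sub_all T0_le => h /= /leq_ltn_trans; apply.
rewrite (IHT _ (head 0 c)) ?cat_rcons // /bottoms map_rcons all_rcons leqnn /=.
by apply: sub_all T0_le => h /= /leq_ltn_trans/(_ lo_c)/ltnW.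
Qed.

Lemma Rr_reading n T : tableau_ok n T -> Rr (reading T) = T.
Proof. by case/andP=> T_ok T_path; rewrite /Rr (foldl_rins_reading (lo := 0) _ T_ok). Qed.

Definition normal n (w : seq nat) := all (in_alph n) w && (reading (Rr w) == w).

Lemma normalP n w : reflect (exists2 T, tableau_ok n T & reading T = w) (normal n w).
Proof.
apply: (iffP andP) => [[w_alph /eqP w_read]|[T T_ok <-]].
  by exists (Rr w); first exact: tableau_ok_Rr.
by rewrite (Rr_reading T_ok) eqxx reading_in_alph //; case/andP: T_ok.
Qed.

Lemma Rr_rcons w c : Rr (rcons w c) = rins (Rr w) c.
Proof. exact: foldl_rcons. Qed.

Lemma normal_rcons n w c : normal n (rcons w c) -> normal n w.
Proof.
case/normalP=> T'; case/lastP: T' => [|T col].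
  by move=> _ /(congr1 size); rewrite size_rcons.
rewrite tableau_ok_rcons reading_rcons => /and3P[T_ok col_ok T_col].
case: col col_ok T_col => [|c' col] // col_ok T_col.
rewrite rev_cons -rcons_cat => /eqP; rewrite eqseq_rcons => /andP[/eqP <- _].
apply/normalP; case: col col_ok T_col => [|b col] col_ok T_col.
  by exists T; rewrite ?cats0.
exists (rcons T (b :: col)); last by rewrite reading_rcons.
case/and3P: col_ok => _ /= /andP[c'_b b_sorted] /andP[_ col_alph].
by rewrite tableau_ok_rcons T_ok /column_ok /= b_sorted col_alph (leq_trans T_col c'_b).
Qed.

(* [(r, l)] are the bottoms of the last two columns of the tableau read so far; a letter
   [c <= l] is the new bottom of the last column, any larger letter opens a new column. *)
Definition read_step (rl : nat * nat) (c : nat) : option (nat * nat) :=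
  let: (r, l) := rl in if c <= l then (if r < c then Some (r, c) else None) else Some (l, c).

Definition read_run (o : option (nat * nat)) (w : seq nat) :=
  foldl (fun o c => obind (read_step^~ c) o) o w.

Definition bottom_pair (T : tableau) := (penult_bottom T, last_bottom T).

Lemma last_reading_rcons T c : c != [::] -> last 0 (reading (rcons T c)) = head 0 c.
Proof. by case: c => // h t _; rewrite reading_rcons last_cat rev_cons last_rcons. Qed.

Lemma has_last_bottom T c : 0 < c -> c <= last_bottom T -> has (fun col => c <= head 0 col) T.
Proof.
case/lastP: T => [|T col] c_pos; first by rewrite /last_bottom /= leqNgt c_pos.
by rewrite last_bottom_rcons has_rcons => ->.
Qed.

Lemma read_step_rins n T c : tableau_ok n T -> in_alph n c ->
  read_step (bottom_pair T) c =
  if reading (rins T c) == rcons (reading T) c then Some (bottom_pair (rins T c)) else None.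
Proof.
case/lastP: T => [|T col].
  by move=> _ /andP[c_pos _]; rewrite /= leqNgt c_pos /reading /= eqxx.
rewrite tableau_ok_rcons => /and3P[T_ok col_ok T_col] /andP[c_pos _].
have T_le := bottoms_le_last T_ok.
rewrite /bottom_pair penult_bottom_rcons last_bottom_rcons /=.
have col_nil : col != [::] by case/and3P: col_ok.
case: (leqP c (head 0 col)) => [c_col|col_c]; last first.
  rewrite rins_new_column ?reading_rcons ?cats1 ?eqxx ?penult_bottom_rcons ?last_bottom_rcons //.
  rewrite /bottoms map_rcons all_rcons col_c.
  by apply: sub_all T_le => h /= /leq_ltn_trans/(_ (ltn_trans T_col col_c)).
case: (ltnP (last_bottom T) c) => [T_c|c_T].
  have -> : rins (rcons T col) c = rcons T (c :: col).
    rewrite -cats1 rins_cat has_bottom_geF /= ?c_col ?cats1 //.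
    by apply: sub_all T_le => h /= /leq_ltn_trans; apply.
  by rewrite !reading_rcons rev_cons rcons_cat eqxx penult_bottom_rcons !last_bottom_rcons.
case: eqP => // /(congr1 (last 0)); rewrite last_rcons.
rewrite -cats1 rins_cat has_last_bottom // cats1 last_reading_rcons // => col_eq.
by move: T_col; rewrite col_eq ltnNge c_T.
Qed.

Lemma read_run_Rr n w : all (in_alph n) w ->
  read_run (Some (0, 0)) w = if normal n w then Some (bottom_pair (Rr w)) else None.
Proof.
elim/last_ind: w => [|w c IHw] //; rewrite all_rcons => /andP[c_ok w_ok].
rewrite /read_run foldl_rcons -/(read_run _ w) IHw //.
case w_normal: (normal n w); last first.
  by case: ifP => // /normal_rcons; rewrite w_normal.
move/andP: w_normal => [_ /eqP w_read].
rewrite -[LHS]/(read_step (bottom_pair (Rr w)) c) (read_step_rins (tableau_ok_Rr w_ok) c_ok).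
by rewrite /normal all_rcons c_ok w_ok Rr_rcons w_read.
Qed.

(** * The language L *)

Definition blocks (e : nat -> nat) j k := flatten [seq nseq (e i) i | i <- rev (iota j k)].

Lemma blocksS e j k : blocks e j k.+1 = nseq (e (j + k)) (j + k) ++ blocks e j k.
Proof. by rewrite /blocks -addn1 iotaD /= cats1 rev_rcons. Qed.

Lemma count_blocks e j k x : count_mem x (blocks e j k) = (j <= x < j + k) * e x.
Proof.
elim: k => [|k IHk]; first by rewrite addn0 ltnNge andbN.
rewrite blocksS count_cat count_nseq IHk /= addnS ltnS.
have [->|x_ne] := eqVneq x (j + k); first by rewrite ltnn leq_addr leqnn andbF addn0.
by rewrite [x <= _]leq_eqVlt (negbTE x_ne).
Qed.

Lemma mem_blocks e j k x : (x \in blocks e j k) = (j <= x < j + k) && (0 < e x).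
Proof. by rewrite -has_pred1 has_count count_blocks muln_gt0 lt0b. Qed.

Lemma sorted_blocks e j k : sorted geq (blocks e j k).
Proof.
elim: k => [|k IHk] //; rewrite blocksS.
have lt_k : all (geq (j + k)) (blocks e j k).
  by apply/allP => x; rewrite mem_blocks => /andP[/andP[_ /ltnW]].
elim: (e (j + k)) => [|m IHm] //=.
by rewrite (path_sortedE (rev_trans leq_trans)) IHm all_cat all_nseq lt_k leqnn orbT.
Qed.

Lemma blocks_count j k u : sorted geq u -> all (fun a => j <= a < j + k) u ->
  blocks (fun i => count_mem i u) j k = u.
Proof.
move=> u_sorted u_range.
apply: (sorted_eq (rev_trans leq_trans)) => //.
- by move=> x y /andP[y_x x_y]; apply/anti_leq/andP.
- exact: sorted_blocks.
apply/allP => x _ /=; rewrite count_blocks.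
case: (boolP (j <= x < j + k)) => [_|x_out]; first by rewrite mul1n.
by rewrite mul0n eq_sym; apply/eqP/count_memPn; exact: contra (allP u_range x) x_out.
Qed.

Lemma head_mem (c : seq nat) : c != [::] -> head 0 c \in c.
Proof. by case: c => // *; apply: mem_head. Qed.

Lemma inLj_column n j u : 0 < j <= n ->
  inLj n j u <-> column_ok n (rev u) /\ head 0 (rev u) = j.
Proof.
case/andP=> j_pos j_n; have jk : j + (n - j + 1) = n.+1 by rewrite addnA subnKC // addn1.
split=> [[e [e_j ->]]|[/and3P[u_nil u_sorted u_alph] u_head]].
  rewrite -/(blocks e j (n - j + 1)); set c := rev _.
  have c_mem a : (a \in c) = (j <= a < n.+1) && (0 < e a) by rewrite mem_rev mem_blocks jk.
  have j_c : j \in c by rewrite c_mem leqnn ltnS j_n e_j.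
  have c_sorted : sorted leq c by rewrite rev_sorted; apply: sorted_blocks.
  have c_nil : c != [::] by apply/eqP => c0; rewrite c0 in j_c.
  have j_head : j <= head 0 c by move: (head_mem c_nil); rewrite c_mem => /andP[/andP[]].
  split; last by apply/eqP; rewrite eqn_leq j_head (allP (head_le_sorted c_sorted)).
  rewrite /column_ok c_nil c_sorted; apply/allP => a; rewrite c_mem => /andP[/andP[j_a a_n] _].
  by rewrite /in_alph (leq_trans j_pos j_a).
exists (fun i => count_mem i u); split.
  by rewrite -has_count has_pred1 -mem_rev -u_head head_mem.
apply/esym/blocks_count; first by move: u_sorted; rewrite rev_sorted.
rewrite jk; apply/allP => a a_u; have a_ru : a \in rev u by rewrite mem_rev.
have /andP[_ a_n] := allP u_alph a a_ru.
by rewrite -u_head (allP (head_le_sorted u_sorted)) // ltnS.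
Qed.

Lemma inLseq_tableau n bs w lo : path ltn lo bs -> all (fun b => b <= n) bs ->
  inLseq n bs w <-> exists T, [/\ all (column_ok n) T, bottoms T = bs & reading T = w].
Proof.
elim: bs w lo => [|b bs IHbs] w lo /=.
  by move=> _ _; split=> [->|[[|c T] [] //= _ _ <-]]; exists [::].
case/andP=> lo_b b_bs /andP[b_n bs_n].
have b_ok : 0 < b <= n by rewrite b_n (leq_ltn_trans (leq0n lo) lo_b).
split=> [[u [v [-> [/(inLj_column _ b_ok)[u_ok u_head] /(IHbs _ _ b_bs bs_n)[T [T_ok <- <-]]]]]]|].
  by exists (rev u :: T); rewrite /= u_ok u_head /reading /= revK.
case=> [[|c T]] [] //= /andP[c_ok T_ok] [c_head T_bs] <-.
exists (rev c), (reading T); split=> //; split; first by apply/(inLj_column _ b_ok); rewrite revK.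
by apply/(IHbs _ b b_bs bs_n); exists T.
Qed.

Lemma sym_inj n : injective (@sym n).
Proof. by move=> i j /succn_inj /val_inj. Qed.

Lemma sym_in_alph n (w : seq 'I_n) : all (in_alph n) (map sym w).
Proof. by apply/allP => a /mapP[i _ ->]; rewrite /in_alph /sym /= ltn_ord. Qed.

Lemma lift_sym n (s : seq nat) : all (in_alph n) s -> exists u : seq 'I_n, map sym u = s.
Proof.
elim: s => [|a s IHs] /=; first by exists [::].
case/andP=> /andP[a_pos a_n] /IHs[u <-].
have a_lt : a.-1 < n by rewrite prednK.
by exists (Ordinal a_lt :: u); rewrite /= /sym /= prednK.
Qed.

Definition sym_set n (B : {set 'I_n}) :=
  [seq sym i | i <- sort (fun x y : 'I_n => x <= y) (enum B)].

Lemma sym_set_sorted n (B : {set 'I_n}) : sorted ltn (sym_set B).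
Proof.
rewrite ltn_sorted_uniq_leq map_inj_uniq ?sort_uniq ?enum_uniq //=; last exact: sym_inj.
rewrite sorted_map; apply: (sub_sorted _ (sort_sorted _ _)) => [x y|x y]; last exact: leq_total.
by rewrite /relpre /sym /= ltnS.
Qed.

Lemma sym_set_path n (B : {set 'I_n}) : path ltn 0 (sym_set B).
Proof. by have := sym_set_sorted B; rewrite /sym_set; case: (sort _ _) => //= i s ->. Qed.

Lemma sym_set_le n (B : {set 'I_n}) : all (fun b => b <= n) (sym_set B).
Proof. by apply/allP => a /mapP[i _ ->]; rewrite /sym ltn_ord. Qed.

Lemma inL_normal n w : inL n w <-> normal n (map sym w).
Proof.
have inL_tableau (B : {set 'I_n}) : inLseq n (sym_set B) (map sym w) <->
    exists T, [/\ all (column_ok n) T, bottoms T = sym_set B & reading T = map sym w].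
  exact: (inLseq_tableau _ (sym_set_path B) (sym_set_le B)).
split=> [[B /inL_tableau[T [T_ok T_B T_w]]]|/normalP[T /[dup] /andP[T_ok T_path] T_ok' T_w]].
  by apply/normalP; exists T; rewrite // /tableau_ok T_ok T_B sym_set_path.
exists [set i : 'I_n | sym i \in bottoms T]; apply/inL_tableau; exists T; split=> //.
apply: (irr_sorted_eq ltn_trans ltnn (path_sorted T_path) (sym_set_sorted _)) => a.
apply/idP/mapP=> [a_T|[i]]; last by rewrite mem_sort mem_enum inE => i_T ->.
have /andP[a_pos a_n] := allP (bottoms_in_alph T_ok) a a_T.
have a_lt : a.-1 < n by rewrite prednK.
by exists (Ordinal a_lt); rewrite ?mem_sort ?mem_enum ?inE /sym /= prednK.
Qed.

(** * Right multiplication by a generator *)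

Lemma read_run_cat o w s : read_run o (w ++ s) = read_run (read_run o w) s.
Proof. exact: foldl_cat. Qed.

Lemma read_run_None w : read_run None w = None.
Proof. by elim: w. Qed.

Lemma read_run_cons rl c w : read_run (Some rl) (c :: w) = read_run (read_step rl c) w.
Proof. by []. Qed.

Lemma read_run_reading n T :
  tableau_ok n T -> read_run (Some (0, 0)) (reading T) = Some (bottom_pair T).
Proof.
move=> T_ok; have T_normal : normal n (reading T) by apply/normalP; exists T.
by rewrite (read_run_Rr (proj1 (andP T_normal))) T_normal (Rr_reading T_ok).
Qed.

Lemma read_run_penult_mono r l w r' l' :
  r <= l -> read_run (Some (r, l)) w = Some (r', l') -> r <= r'.
Proof.
elim: w r l => [|c w IHw] r l r_l; first by case=> ->.
rewrite read_run_cons /read_step; case: ifP => [c_l|/negbT]; last first.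
  by rewrite -ltnNge => l_c /(IHw _ _ (ltnW l_c)); apply: leq_trans.
by case: ifP => [r_c|_]; [apply: IHw; apply: ltnW | rewrite read_run_None].
Qed.

(* [w] ends with the column receiving [a]: its bottom [l] is at least [a] while the
   previous bottom [r] is smaller, and [s] starts a new column. *)
Definition ins_split a o (w s : seq nat) :=
  if read_run o w is Some (r, l) then
    (r < a) && (if s is b :: _ then (a <= l) && (l < b) else true)
  else false.

(* Once the column after the insertion point is opened, the penultimate bottom is at
   least [a] for ever. *)
Lemma ins_split_prefix a o w t s :
  ins_split a o w (t ++ s) -> ins_split a o (w ++ t) s -> t = [::].
Proof.
rewrite /ins_split read_run_cat; case: (read_run o w) => [[r l]|] //.
case: t => [|b t] // /andP[_ /andP[a_l l_b]].
rewrite read_run_cons /read_step leqNgt l_b /=.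
case E: (read_run _ t) => [[r' l']|] // /andP[r'_a _].
by move: r'_a; rewrite ltnNge (leq_trans a_l (read_run_penult_mono (ltnW l_b) E)).
Qed.

Lemma ins_split_uniq a o w1 s1 w2 s2 : ins_split a o w1 s1 -> ins_split a o w2 s2 ->
  w1 ++ s1 = w2 ++ s2 -> w1 = w2.
Proof.
wlog le_w : w1 s1 w2 s2 / size w1 <= size w2.
  move=> wlog_le split1 split2 E; case: (leqP (size w1) (size w2)) => [|/ltnW] le_w.
    exact: (wlog_le w1 s1 w2 s2).
  exact/esym/(wlog_le w2 s2 w1 s1).
move=> split1 split2 E.
have w2E : w2 = w1 ++ drop (size w1) w2.
  by rewrite -{1}(cat_take_drop (size w1) w2) -(takel_cat s2 le_w) -E take_size_cat.
move: split2 E; rewrite w2E -catA => split2 /(congr1 (drop (size w1))).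
rewrite !drop_size_cat // => s1E; rewrite s1E in split1.
by rewrite (ins_split_prefix split1 split2) cats0.
Qed.

Lemma last_bottom_lt T a : 0 < a -> ~~ has (fun c => a <= head 0 c) T -> last_bottom T < a.
Proof. by move=> a_pos; apply: contraNT; rewrite -leqNgt; apply: has_last_bottom. Qed.

Lemma reading_gt n x T :
  all (column_ok n) T -> path ltn x (bottoms T) -> all (ltn x) (reading T).
Proof.
elim: T x => [|c T IHT] x //= /andP[/and3P[_ c_sorted _] T_ok] /andP[x_c c_T].
rewrite /reading /= all_cat all_rev -/(reading T); apply/andP; split.
  by apply: sub_all (head_le_sorted c_sorted) => y /(leq_trans x_c).
by apply: sub_all (IHT _ T_ok c_T) => y /(ltn_trans x_c).
Qed.

Lemma normal_rins_split n u a : normal n u -> 0 < a ->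
  exists w s,
    [/\ u = w ++ s, reading (rins (Rr u) a) = w ++ a :: s & ins_split a (Some (0, 0)) w s].
Proof.
case/normalP=> T T_ok <- a_pos; rewrite (Rr_reading T_ok).
case: (boolP (has (fun c => a <= head 0 c) T)) => [T_has|T_hasN]; last first.
  exists (reading T), [::]; rewrite cats0 rins_new_column ?reading_rcons //; last first.
    move: T_hasN; rewrite -all_predC /bottoms all_map.
    by apply: sub_all => c /=; rewrite -ltnNge.
  rewrite /ins_split (read_run_reading T_ok) /bottom_pair /= andbT; split=> //.
  case/lastP: T {T_ok} T_hasN => [|T c] //; rewrite has_rcons negb_or penult_bottom_rcons.
  by case/andP=> _; apply: last_bottom_lt.
move: T_ok; case: (split_find T_has) => c T1 T2 a_c T1_hasN T_ok.
have [T1c_ok T2_ok T2_path] := tableau_ok_cat T_ok.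
exists (reading (rcons T1 c)), (reading T2); split; first exact: reading_cat.
  rewrite rins_cat has_rcons a_c /= -cats1 rins_cat (negbTE T1_hasN) /= a_c.
  by rewrite !reading_cat /reading /= !cats0 rev_cons -cats1 -!catA.
rewrite /ins_split (read_run_reading T1c_ok) /bottom_pair penult_bottom_rcons last_bottom_rcons.
rewrite last_bottom_lt //=; case: (reading T2) (reading_gt T2_ok T2_path) => [|b s] //=.
by rewrite last_bottom_rcons a_c => /andP[-> _].
Qed.

Arguments read_step : simpl never.

Definition mul_state := (nat * nat * nat * nat)%type.
Definition dead : mul_state := (0, 0, 0, 0).
Definition copying r l : mul_state := (1, r, l, 0).
Definition shifted r l b : mul_state := (2, r, l, b).
Definition finished : mul_state := (3, 0, 0, 0).

(* On the padded pair of u and the normal form of u a: while [copying], both tracks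
   carry the common prefix [w]; while [shifted], the lower track repeats the previous
   upper letter [b].  In both phases [(r, l)] is the [read_run] state of the upper track. *)
Definition mul_step a (st : mul_state) (p : option nat * option nat) : mul_state :=
  let: (t, r, l, b) := st in
  match p with
  | (Some x, Some y) =>
    if t == 1 then
      if x == y then (if read_step (r, l) x is Some (r', l') then copying r' l' else dead)
      else if [&& y == a, a <= l, r < a & l < x] then shifted l x x else dead
    else if (t == 2) && (y == b) then
      (if read_step (r, l) x is Some (r', l') then shifted r' l' x else dead)
    else dead
  | (None, Some y) =>
    if ((t == 1) && (y == a) && (r < a)) || ((t == 2) && (y == b)) then finished else dead
  | _ => dead
  end.

Lemma mul_run_dead a q : foldl (mul_step a) dead q = dead.
Proof. by elim: q => [|[[x|] [y|]] q IHq]. Qed.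

Lemma mul_run_finished a q : foldl (mul_step a) finished q = finished -> q = [::].
Proof. by case: q => [|[[x|] [y|]] q] //=; rewrite mul_run_dead. Qed.

Lemma mul_run_copying a w r l r' l' z : read_run (Some (r, l)) w = Some (r', l') ->
  foldl (mul_step a) (copying r l) (conv w w ++ z) = foldl (mul_step a) (copying r' l') z.
Proof.
elim: w r l => [|x w IHw] r l; first by case=> -> ->.
rewrite read_run_cons /= eqxx.
by case: (read_step (r, l) x) => [[r1 l1]|]; [apply: IHw | rewrite read_run_None].
Qed.

Lemma mul_run_shifted a s r l b : read_run (Some (r, l)) s != None ->
  foldl (mul_step a) (shifted r l b) (conv s (b :: s)) = finished.
Proof.
elim: s r l b => [|x s IHs] r l b /=; first by rewrite eqxx.
rewrite eqxx.
by case: (read_step (r, l) x) => [[r1 l1]|]; [apply: IHs | rewrite read_run_None].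
Qed.

Definition upper_in_alph n (p : option nat * option nat) := oapp (in_alph n) true p.1.

Lemma mul_run_shiftedP n a q r l b : all (upper_in_alph n) q ->
  foldl (mul_step a) (shifted r l b) q = finished ->
  exists s, [/\ q = conv s (b :: s), read_run (Some (r, l)) s != None & all (in_alph n) s].
Proof.
elim: q r l b => [|[[x|] [y|]] q IHq] r l b //=; rewrite ?mul_run_dead //.
- rewrite {1}/upper_in_alph /=; case/andP=> x_ok q_ok.
  case: eqP => [<-|_]; last by rewrite mul_run_dead.
  case E: (read_step (r, l) x) => [[r1 l1]|]; last by rewrite mul_run_dead.
  case/(IHq _ _ _ q_ok) => s [-> s_run s_ok].
  by exists (x :: s); rewrite read_run_cons E /= x_ok.
- move=> _; case: ifP => [/eqP ->|_]; last by rewrite mul_run_dead.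
  by move/mul_run_finished => ->; exists [::].
Qed.

Lemma mul_run_copyingP n a q r l : all (upper_in_alph n) q ->
  foldl (mul_step a) (copying r l) q = finished ->
  exists w s, [/\ q = conv w w ++ conv s (a :: s), ins_split a (Some (r, l)) w s,
    read_run (Some (r, l)) (w ++ s) != None & all (in_alph n) (w ++ s)].
Proof.
elim: q r l => [|[[x|] [y|]] q IHq] r l //=; rewrite ?mul_run_dead //.
- rewrite {1}/upper_in_alph /=; case/andP=> x_ok q_ok; case: eqP => [<-|_].
    case E: (read_step (r, l) x) => [[r1 l1]|]; last by rewrite mul_run_dead.
    case/(IHq _ _ q_ok) => w [s [-> w_split ws_run ws_ok]].
    by exists (x :: w), s; rewrite /ins_split !read_run_cons E /= x_ok.
  case: ifP => [/and4P[/eqP -> a_l r_a l_x]|_]; last by rewrite mul_run_dead.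
  case/(mul_run_shiftedP q_ok) => s [-> s_run s_ok].
  have step_x : read_step (r, l) x = Some (l, x) by rewrite /read_step leqNgt l_x.
  by exists [::], (x :: s); rewrite /ins_split /= r_a a_l l_x step_x x_ok.
- move=> _; rewrite orbF; case: ifP => [/andP[/eqP -> r_a]|_]; last by rewrite mul_run_dead.
  by move/mul_run_finished => ->; exists [::], [::]; rewrite /ins_split /= r_a.
Qed.

Lemma mul_accepts n a q : 0 < a -> all (upper_in_alph n) q ->
  (exists u, normal n u /\ q = conv u (reading (rins (Rr u) a))) <->
  foldl (mul_step a) (copying 0 0) q = finished.
Proof.
move=> a_pos q_ok; split=> [[u [u_normal ->]]|].
  have [w [s [u_ws -> ws_split]]] := normal_rins_split u_normal a_pos.
  have u_run : read_run (Some (0, 0)) u != None.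
    by case/andP: u_normal => u_ok u_read; rewrite (read_run_Rr u_ok) /normal u_ok u_read.
  move: ws_split u_run; rewrite {u_normal}u_ws conv_cat_diag /ins_split read_run_cat.
  case E: (read_run _ w) => [[r l]|] // /andP[r_a s_split] s_run.
  rewrite (mul_run_copying _ _ E); case: s s_split s_run => [|x s] /=; first by rewrite eqxx r_a.
  case/andP=> a_l l_x; rewrite /read_step leqNgt l_x => s_run.
  by rewrite (gtn_eqF (leq_ltn_trans a_l l_x)) eqxx a_l r_a /= mul_run_shifted.
case/(mul_run_copyingP q_ok) => w [s [-> ws_split ws_run ws_ok]].
have ws_normal : normal n (w ++ s).
  by move: ws_run; rewrite (read_run_Rr ws_ok); case: ifP.
have [w' [s' [ws_E ins_E ws'_split]]] := normal_rins_split ws_normal a_pos.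
have w'E := ins_split_uniq ws_split ws'_split ws_E.
move: ws_E ins_E; rewrite -w'E => /(congr1 (drop (size w))).
rewrite !drop_size_cat // => <- ins_E.
by exists (w ++ s); rewrite ins_E conv_cat_diag.
Qed.

(** * Automaticity *)

Lemma inL_uniq n u v : inL n u -> inL n v -> rps_eq u v -> u = v.
Proof.
move=> /inL_normal/andP[_ /eqP u_read] /inL_normal/andP[_ /eqP v_read] uv.
by apply: (inj_map (@sym_inj n)); rewrite -u_read -v_read; congr reading.
Qed.

Lemma inL_surj n (w : seq 'I_n) : exists u, inL n u /\ rps_eq u w.
Proof.
have T_ok := tableau_ok_Rr (sym_in_alph w).
have [u u_read] := lift_sym (reading_in_alph (proj1 (andP T_ok))).
exists u; split; last by rewrite /rps_eq /RrA u_read (Rr_reading T_ok).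
by apply/inL_normal/normalP; exists (Rr (map sym w)).
Qed.

Definition read_states n : seq (option (nat * nat)) :=
  None :: codom (fun q : 'I_n.+1 * 'I_n.+1 => Some (val q.1, val q.2)).

Lemma mem_read_states n o :
  (o \in read_states n) = if o is Some (r, l) then (r <= n) && (l <= n) else true.
Proof.
case: o => [[r l]|]; last exact: mem_head.
rewrite in_cons [_ == None]/= orFb.
apply/codomP/andP => [[[i j] [-> ->]]|[r_n l_n]]; first by rewrite !leq_ord.
by exists (Ordinal (r_n : r < n.+1), Ordinal (l_n : l < n.+1)).
Qed.

Lemma read_step_le n r l c r' l' : read_step (r, l) c = Some (r', l') ->
  r <= n -> l <= n -> c <= n -> (r' <= n) && (l' <= n).
Proof.
rewrite /read_step; case: ifP => _; [case: ifP => _ //|];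
  by case=> <- <- r_n l_n c_n; rewrite ?r_n ?l_n c_n.
Qed.

Lemma read_states_step n o c : o \in read_states n -> c <= n ->
  obind (read_step^~ c) o \in read_states n.
Proof.
rewrite !mem_read_states; case: o => [[r l]|] //= /andP[r_n l_n] c_n.
by case E: (read_step _ _) => [[r' l']|] //; apply: read_step_le E r_n l_n c_n.
Qed.

Lemma regular_inL n : regular (inL n).
Proof.
apply: (@regular_of_closed_states _ _ (read_states n) (Some (0, 0))
  (fun o i => obind (read_step^~ (sym i)) o) (fun o => o != None)).
- by rewrite mem_read_states.
- by move=> o i o_in; apply: read_states_step o_in (ltn_ord i).
move=> w; rewrite -(foldl_map (fun o c => obind (read_step^~ c) o) sym) -/(read_run _ _).
rewrite (read_run_Rr (sym_in_alph w)).
by split=> [/inL_normal -> //|]; case: ifP => // w_normal _; apply/inL_normal.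
Qed.

Definition diag_step n (o : option (nat * nat)) (p : option 'I_n * option 'I_n) :=
  if p is (Some i, Some j) then (if i == j then obind (read_step^~ (sym i)) o else None) else None.

Lemma diag_run_conv n o (u : seq 'I_n) :
  foldl (@diag_step n) o (conv u u) = read_run o (map sym u).
Proof. by elim: u o => [|i u IHu] o //=; rewrite eqxx IHu. Qed.

Lemma diag_run_None n p : foldl (@diag_step n) None p = None.
Proof. by elim: p => [|[[i|] [j|]] p IHp] //=; case: ifP. Qed.

Lemma diag_run_diag n o p : foldl (@diag_step n) o p != None -> exists u, p = conv u u.
Proof.
elim: p o => [|[[i|] [j|]] p IHp] o /=; first by exists [::].
- by case: (i =P j) => [<- /IHp[u ->]|_]; [exists (i :: u) | rewrite diag_run_None].
all: by rewrite diag_run_None.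
Qed.

Lemma La_None_conv n p : La (inL n) None p <-> exists2 u, inL n u & p = conv u u.
Proof.
split=> [[u [v [u_L [v_L [uv ->]]]]]|[u u_L ->]]; last by exists u, u; rewrite cats0 deltaRE.
by exists u; rewrite // deltaRE (inL_uniq u_L v_L) // -(cats0 u).
Qed.

Lemma regular_La_None n : regular (La (inL n) None).
Proof.
apply: (@regular_of_closed_states _ _ (read_states n) (Some (0, 0)) (@diag_step n)
  (fun o => o != None)).
- by rewrite mem_read_states.
- move=> o [[i|] [j|]] o_in /=; try exact: mem_head.
  by case: ifP => _; [exact: read_states_step o_in (ltn_ord i) | exact: mem_head].
move=> p; apply: iff_trans (La_None_conv p) _.
split=> [[u /inL_normal u_normal ->]|/[dup] /diag_run_diag[u ->]].
  by rewrite diag_run_conv (read_run_Rr (sym_in_alph u)) u_normal.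
rewrite diag_run_conv (read_run_Rr (sym_in_alph u)).
by case: ifP => // u_normal _; exists u; first exact/inL_normal.
Qed.

Lemma La_Some_conv n x p : La (inL n) (Some x) p <->
  exists U, normal n U /\ map (omap2 sym) p = conv U (reading (rins (Rr U) (sym x))).
Proof.
split=> [[u [v [/inL_normal u_normal [/inL_normal/andP[_ /eqP v_read] [uv ->]]]]]|].
  exists (map sym u); split=> //; rewrite deltaRE map_conv -v_read.
  by move: uv; rewrite /rps_eq /RrA map_cat cats1 Rr_rcons => ->.
case=> U [U_normal pE]; have [u uE] := lift_sym (proj1 (andP U_normal)).
have T_ok : tableau_ok n (rins (Rr U) (sym x)).
  apply: tableau_ok_rins; last by rewrite /in_alph ltn_ord.
  by apply: tableau_ok_Rr; case/andP: U_normal.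
have [v vE] := lift_sym (reading_in_alph (proj1 (andP T_ok))).
exists u, v; split; first by apply/inL_normal; rewrite uE.
split; first by apply/inL_normal/normalP; exists (rins (Rr U) (sym x)).
split; first by rewrite /rps_eq /RrA vE (Rr_reading T_ok) map_cat cats1 Rr_rcons uE.
by apply: (inj_map (omap2_inj (@sym_inj n))); rewrite pE deltaRE map_conv uE vE.
Qed.

Definition mul_states n : seq mul_state :=
  codom (fun q : 'I_4 * 'I_n.+1 * 'I_n.+1 * 'I_n.+1 =>
           (val q.1.1.1, val q.1.1.2, val q.1.2, val q.2)).

Lemma mem_mul_states n t r l b :
  ((t, r, l, b) \in mul_states n) = [&& t < 4, r <= n, l <= n & b <= n].
Proof.
apply/codomP/and4P => [[[[[t' r'] l'] b'] [-> -> -> ->]]|[t_4 r_n l_n b_n]].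
  by rewrite ltn_ord !leq_ord.
by exists (Ordinal t_4, Ordinal (r_n : r < n.+1), Ordinal (l_n : l < n.+1),
  Ordinal (b_n : b < n.+1)).
Qed.

Lemma mul_states_step n a st p : st \in mul_states n -> oapp (leq^~ n) true p.1 ->
  mul_step a st p \in mul_states n.
Proof.
case: st => [[[t r] l] b]; rewrite mem_mul_states => /and4P[_ r_n l_n _].
have read_in K x : x <= n -> (forall r' l', r' <= n -> l' <= n -> K r' l' \in mul_states n) ->
    (if read_step (r, l) x is Some (r', l') then K r' l' else dead) \in mul_states n.
  move=> x_n K_in; case E: (read_step _ _) => [[r' l']|]; last by rewrite mem_mul_states.
  by case/andP: (read_step_le E r_n l_n x_n); apply: K_in.
case: p => [[x|] [y|]] /= x_n; rewrite ?mem_mul_states //; repeat case: ifP => _;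
  rewrite ?mem_mul_states ?l_n ?x_n //; apply: read_in => // r' l' r'_n l'_n;
  by rewrite mem_mul_states r'_n l'_n ?x_n.
Qed.

Lemma regular_La_Some n (x : 'I_n) : regular (La (inL n) (Some x)).
Proof.
apply: (@regular_of_closed_states _ _ (mul_states n) (copying 0 0)
  (fun st p => mul_step (sym x) st (omap2 sym p)) (pred1 finished)).
- by rewrite mem_mul_states.
- by move=> st [[i|] j] st_in; apply: mul_states_step => //=; apply: ltn_ord.
move=> p; apply: iff_trans (La_Some_conv x p) _.
rewrite -(foldl_map (mul_step (sym x)) (omap2 sym)).
have p_ok : all (upper_in_alph n) (map (omap2 sym) p).
  by apply/allP => _ /mapP[[[i|] j] _ ->] //; rewrite /upper_in_alph /in_alph /= ltn_ord.
by apply: iff_trans (mul_accepts _ p_ok) _; split=> [->|/eqP].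
Qed.

Theorem theorem6p3 (n : nat) : automatic_structure_rps n (inL n).
Proof.
split; first exact: regular_inL.
split; first exact: inL_surj.
by case=> [x|]; [exact: regular_La_Some | exact: regular_La_None].
Qed.
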